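(* Let $\Sigma\in\mathbb R^{d\times d}$ be symmetric positive definite, $a\in\mathbb R^d$, $\lambda>0$. Let $w_t,\hat w_t$ solve the gradient flows $\frac{d}{dt}w_t=-(\Sigma w_t-a)$, $\frac{d}{dt}\hat w_t=-(\Sigma\hat w_t-a+\lambda\hat w_t)$ with $w_0=\hat w_0=0$, so $w_t=(I-e^{-\Sigma t})\Sigma^{-1}a$ and $\hat w_t=(I-e^{-(\Sigma+\lambda I)t})(\Sigma+\lambda I)^{-1}a$. With the continuous weighting scheme $P_t=1-e^{-\lambda t}$, $p_t=\lambda e^{-\lambda t}$, and $\tilde w_t=P_t^{-1}\int_0^tp_sw_s\,ds$, we have for all $t>0$ $$\hat w_t-\tilde w_t=(1-P_t)(w_t-\tilde w_t).$$
   Context: This is the gradient-flow limit of gradient descent for $L(w)=\frac12w^\top\Sigma w-w^\top a$ and its $\ell_2$-regularized version $L(w)+\frac\lambda2\|w\|_2^2$. *)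

From HB Require Import structures.
From mathcomp Require Import all_boot all_order all_algebra.
From mathcomp Require Import all_classical all_reals all_analysis.
Set Implicit Arguments. Unset Strict Implicit. Unset Printing Implicit Defensive.
Import Order.TTheory GRing.Theory Num.Theory.
Import numFieldNormedType.Exports.
Local Open Scope ring_scope.
Local Open Scope classical_set_scope.

Definition sym_posdef (R : realType) (d : nat) (S : 'M[R]_d) : Prop :=
  S^T = S /\ forall v : 'cV[R]_d, v != 0 -> 0 < (v^T *m S *m v) 0 0.

Definition Pw (R : realType) (lam t : R) : R := 1 - expR (- (lam * t)).
Definition pw (R : realType) (lam t : R) : R := lam * expR (- (lam * t)).

Definition wtilde (R : realType) (d : nat) (lam : R) (w : R -> 'cV[R]_d) (t : R)
  : 'cV[R]_d :=
  \col_i ((Pw lam t)^-1 *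
          Rintegral (@lebesgue_measure R) `[0, t] (fun s => pw lam s * w s i 0)).

From HB Require Import structures.
From mathcomp Require Import all_boot all_order all_algebra.
From mathcomp Require Import all_classical all_reals all_analysis.
From mathcomp Require Import ring lra.
Import Order.TTheory GRing.Theory Num.Theory.
Import numFieldNormedType.Exports.
Local Open Scope ring_scope.
Local Open Scope classical_set_scope.

(* Write e_s = exp(-lam s) = 1 - P_s, so that p_s = lam e_s.  The proof never
   solves the flows explicitly; it only uses the two differential equations.
   1. The "defect" K_s = what'_s - e_s w'_s solves the linear equation
      K' = -(Sigma + lam I) K with K_0 = 0.  Since Sigma + lam I is positive
      semidefinite, the energy |K_s|^2 is nonincreasing (its derivative is
      -2 K^T (Sigma + lam I) K), hence K vanishes for s >= 0.
   2. Consequently F_s = what_s - e_s w_s satisfies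
      F' = what' - e w' + lam e w = p w, and the fundamental theorem of calculus
      gives \int_0^t p_s w_s ds = F_t = what_t - e_t w_t, i.e.
      what_t = e_t w_t + P_t wtilde_t.
   3. Then what_t - wtilde_t = e_t (w_t - wtilde_t), which is the claim. *)

Section CoordinateDerivatives.
Context {R : realType}.

Lemma is_derive_eqf {W : normedModType R} {f g : R -> W} {x : R} {df dg : W} :
  f =1 g -> df = dg -> is_derive x 1 f df -> is_derive x 1 g dg.
Proof. by move=> /funext -> ->. Qed.

Lemma is_derive_coord {m n} {f : R -> 'M[R]_(m, n)} {x : R} {df : 'M[R]_(m, n)} i j :
  is_derive x 1 f df -> is_derive x 1 (fun t => f t i j) (df i j).
Proof.
move=> [f_der fx_df].
have quot_cvg : (fun h : R => h^-1 *: ((f \o shift x) (h *: 1) - f x)) @ 0^' --> df.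
  by rewrite -fx_df; exact: f_der.
have := cvg_comp _ _ quot_cvg (@coord_continuous R m n i j df).
have -> : (fun M : 'M[R]_(m, n) => M i j) \o
          (fun h : R => h^-1 *: ((f \o shift x) (h *: 1) - f x)) =
          (fun h : R => h^-1 *: (((fun t => f t i j) \o shift x) (h *: 1) - f x i j)).
  by apply/funext => h /=; rewrite !mxE.
move=> entry_cvg; apply: DeriveDef; last exact: cvg_lim.
by apply/cvg_ex; exists (df i j).
Qed.

Lemma is_derive_sumf {n} {h : 'I_n -> R -> R} {x : R} {dh : 'I_n -> R} :
  (forall k, is_derive x 1 (h k) (dh k)) ->
  is_derive x 1 (fun t => \sum_(k < n) h k t) (\sum_(k < n) dh k).
Proof.
move=> dh_k; apply: is_derive_eqf (is_derive_sum dh_k) => // t.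
by rewrite fct_sumE.
Qed.

Lemma is_derive_mulmx_coord {m n p} (A : 'M[R]_(m, n)) {f : R -> 'M[R]_(n, p)}
    {x : R} {df : 'M[R]_(n, p)} i j :
  is_derive x 1 f df -> is_derive x 1 (fun t => (A *m f t) i j) ((A *m df) i j).
Proof.
move=> f_df.
have := is_derive_sumf (fun k => is_deriveZ (A i k) (is_derive_coord k j f_df)).
apply: is_derive_eqf => [t|]; rewrite mxE; exact: eq_bigr.
Qed.

Lemma is_derive_expN (lam x : R) :
  is_derive x 1 (fun s => expR (- (lam * s))) (- lam * expR (- (lam * x))).
Proof.
have lin : is_derive x 1 (fun s : R => - (lam * s)) (- lam).
  apply: is_derive_eqf (is_deriveN (is_deriveZ lam (is_derive_id x 1))) => //.
  by rewrite [_%:A]mulr1.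
apply: is_derive_eqf (is_derive1_comp (is_derive_expR _) lin) => //.
by rewrite mulrC.
Qed.

End CoordinateDerivatives.

Section Energy.
Context {R : realType} {d : nat}.

Definition psd (S : 'M[R]_d) : Prop := forall v : 'cV[R]_d, 0 <= (v^T *m S *m v) 0 0.

Definition sqnorm (v : 'cV[R]_d) : R := \sum_(i < d) v i 0 ^+ 2.

Lemma sqnorm_ge0 (v : 'cV[R]_d) : 0 <= sqnorm v.
Proof. by apply: sumr_ge0 => i _; exact: sqr_ge0. Qed.

Lemma sqnorm_eq0 (v : 'cV[R]_d) : sqnorm v = 0 -> v = 0.
Proof.
move=> v0; apply/matrixP => i j; rewrite (ord1 j) mxE.
have /eqP := psumr_eq0P (fun k _ => sqr_ge0 (v k 0)) v0 (i := i) isT.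
by rewrite sqrf_eq0 => /eqP.
Qed.

Lemma posdef_psd {S : 'M[R]_d} : sym_posdef S -> psd S.
Proof.
move=> [_ S_pos] v; have [->|/S_pos/ltW //] := eqVneq v 0.
by rewrite mulmx0 mxE.
Qed.

(* Shifting a positive semidefinite matrix by a nonnegative multiple of the
   identity keeps it positive semidefinite: v^T (S + lam I) v = v^T S v + lam |v|^2. *)
Lemma psd_shift {S : 'M[R]_d} {lam : R} : psd S -> 0 <= lam -> psd (S + lam%:M).
Proof.
move=> S_psd lam_ge0 v.
rewrite mulmxDr mul_mx_scalar mulmxDl -scalemxAl mxE [X in _ + X]mxE.
apply: addr_ge0 => //; apply: mulr_ge0 => //.
rewrite mxE; apply: sumr_ge0 => i _; rewrite mxE -expr2; exact: sqr_ge0.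
Qed.

Context {S : 'M[R]_d} {K : R -> 'cV[R]_d}.
Hypothesis dK : forall (s : R) (i : 'I_d), is_derive s 1 (fun u => K u i 0) (- (S *m K s) i 0).

Lemma is_derive_energy (s : R) :
  is_derive s 1 (fun u => sqnorm (K u)) (- 2 * ((K s)^T *m S *m K s) 0 0).
Proof.
have := is_derive_sumf (fun i => is_deriveX 2 (dK s i)).
apply: is_derive_eqf => [u|]; first exact: eq_bigr.
rewrite -mulmxA mxE mulr_sumr; apply: eq_bigr => i _.
rewrite !mxE /GRing.scale /=; ring.
Qed.

Hypotheses (S_psd : psd S) (K0 : K 0 = 0).

(* A dissipative linear flow started at 0 stays at 0: the energy is
   nonnegative, vanishes at 0 and is nonincreasing by the mean value theorem. *)
Lemma dissipative_flow_zero (s : R) : 0 <= s -> K s = 0.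
Proof.
move=> s_ge0; apply: sqnorm_eq0; apply/eqP; rewrite eq_le sqnorm_ge0 andbT.
have energy_cont : {within `[0, s], continuous (fun u => sqnorm (K u))}.
  by apply: derivable_within_continuous => x _; case: (is_derive_energy x).
have [c _] := MVT_segment s_ge0 (fun x _ => is_derive_energy x) energy_cont.
have -> : sqnorm (K 0) = 0 by rewrite K0; apply: big1 => i _; rewrite mxE expr0n.
rewrite !subr0 => ->; have := S_psd (K c); nra.
Qed.

End Energy.

Section GradientFlows.
Context {R : realType} {d : nat} {Sigma : 'M[R]_d} {a : 'cV[R]_d} {lam : R}.
Context {w what : R -> 'cV[R]_d}.
Hypothesis dw : forall t : R, is_derive t 1 w (- (Sigma *m w t - a)).
Hypothesis dwh : forall t : R, is_derive t 1 what (- (Sigma *m what t - a + lam *: what t)).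

(* The defect K_s = what'_s - exp(-lam s) w'_s, written via the two equations. *)
Definition flow_defect (s : R) : 'cV[R]_d :=
  - (Sigma *m what s - a + lam *: what s) - expR (- (lam * s)) *: - (Sigma *m w s - a).

Lemma is_derive_flow_defect (s : R) (i : 'I_d) :
  is_derive s 1 (fun u => flow_defect u i 0) (- ((Sigma + lam%:M) *m flow_defect s) i 0).
Proof.
have dSwh := is_derive_mulmx_coord Sigma i 0 (dwh s).
have dwh_i := is_derive_coord i 0 (dwh s).
have dSw := is_derive_mulmx_coord Sigma i 0 (dw s).
have da := is_derive_cst (a i 0) s 1.
have := is_deriveB (is_deriveN (is_deriveD (is_deriveB dSwh da) (is_deriveZ lam dwh_i)))
  (is_deriveM (is_derive_expN lam s) (is_deriveN (is_deriveB dSw da))).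
apply: is_derive_eqf => [u|]; first by rewrite /flow_defect !fctE !mxE.
rewrite mulmxDl mul_scalar_mx /flow_defect mulmxBr -scalemxAr.
move: (Sigma *m _) (Sigma *m - _) => SH SW.
rewrite !fctE !mxE /GRing.scale /=; ring.
Qed.

Hypotheses (w0 : w 0 = 0) (wh0 : what 0 = 0).
Hypotheses (Sigma_pd : sym_posdef Sigma) (lam_gt0 : 0 < lam).

Lemma flow_defect_zero (s : R) : 0 <= s -> flow_defect s = 0.
Proof.
apply: (@dissipative_flow_zero _ _ (Sigma + lam%:M)) => //.
- exact: is_derive_flow_defect.
- exact: psd_shift (posdef_psd Sigma_pd) (ltW lam_gt0).
by rewrite /flow_defect w0 wh0 mulmx0 scaler0 mulr0 oppr0 expR0 scale1r addr0 subrr.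
Qed.

Lemma weighted_integral (t : R) (i : 'I_d) : 0 < t ->
  Rintegral (@lebesgue_measure R) `[0, t] (fun s => pw lam s * w s i 0) =
  what t i 0 - expR (- (lam * t)) * w t i 0.
Proof.
move=> t_gt0.
pose F s := what s i 0 - expR (- (lam * s)) * w s i 0.
have dF (s : R) : is_derive s 1 F (flow_defect s i 0 + pw lam s * w s i 0).
  apply: is_derive_eqf (is_deriveB (is_derive_coord i 0 (dwh s))
    (is_deriveM (is_derive_expN lam s) (is_derive_coord i 0 (dw s)))) => //.
  rewrite /flow_defect /pw !mxE /GRing.scale /=; ring.
have F_cont (x : R) : {for x, continuous F}.
  by apply: differentiable_continuous; apply/derivable1_diffP; case: (dF x).
have integrand_cont : {within `[0, t], continuous (fun s => pw lam s * w s i 0)}.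
  apply: derivable_within_continuous => x _.
  have dpw := is_deriveZ lam (is_derive_expN lam x).
  by case: (is_deriveM dpw (is_derive_coord i 0 (dw x))).
have F_reg : derivable_oo_LRcontinuous F 0 t.
  split; first by move=> x _; case: (dF x).
  - exact: cvg_at_right_filter (F_cont 0).
  - exact: cvg_at_left_filter (F_cont t).
have F'_eq : {in `]0, t[%R, F^`() =1 (fun s => pw lam s * w s i 0)}.
  move=> x; rewrite in_itv /= => /andP [x_gt0 _].
  by rewrite derive1E derive_val flow_defect_zero ?(ltW x_gt0) // mxE add0r.
rewrite /Rintegral (continuous_FTC2 t_gt0 integrand_cont F_reg F'_eq).
by rewrite /F w0 wh0 !mxE /= mulr0 !subr0.
Qed.

End GradientFlows.

Theorem mainTheorem9 (R : realType) (d : nat) (Sigma : 'M[R]_d) (a : 'cV[R]_d)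
  (lam : R) (w what : R -> 'cV[R]_d) :
  sym_posdef Sigma -> 0 < lam ->
  (forall t : R, is_derive t 1 w (- (Sigma *m w t - a))) ->
  (forall t : R, is_derive t 1 what (- (Sigma *m what t - a + lam *: what t))) ->
  w 0 = 0 -> what 0 = 0 ->
  forall t : R, 0 < t ->
    what t - wtilde lam w t = (1 - Pw lam t) *: (w t - wtilde lam w t).
Proof.
move=> Sigma_pd lam_gt0 dw dwh w0 wh0 t t_gt0.
have P_neq0 : Pw lam t != 0.
  by rewrite subr_eq0 eq_sym lt_eqF // expR_lt1 oppr_lt0 mulr_gt0.
apply/matrixP => i j; rewrite (ord1 j) !mxE.
rewrite (weighted_integral dw dwh w0 wh0 Sigma_pd lam_gt0 _ i t_gt0).
by rewrite /Pw in P_neq0 *; field.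
Qed.
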